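(* Let $A\in\mathbb{R}^{n\times n}$, $\bm{g}\in\mathbb{R}^n$, and let $\bm{y}$ be a solution of $\bm{y}''(t)=-A\bm{y}(t)+\bm{g}$ on $\mathbb{R}$. Then for all $t\in\mathbb{R}$ and $\delta>0$, $$\bm{y}(t+\delta)-2\bm{y}(t)+\bm{y}(t-\delta)=\delta^2\psi(\delta^2A)\big(-A\bm{y}(t)+\bm{g}\big).$$ Consequently, for $\bm{y}$ with $\bm{y}(0)=\bm{u}$, $\bm{y}'(0)=\bm{v}$, the one-step scheme $\bm{y}_0=\bm{u}$, $\bm{v}_0=\sigma(\delta^2A)\bm{v}$, $\bm{v}_{k+1/2}=\bm{v}_k+\tfrac12\delta\psi(\delta^2A)(-A\bm{y}_k+\bm{g})$, $\bm{y}_{k+1}=\bm{y}_k+\delta\bm{v}_{k+1/2}$, $\bm{v}_{k+1}=\bm{v}_{k+1/2}+\tfrac12\delta\psi(\delta^2A)(-A\bm{y}_{k+1}+\bm{g})$ produces $\bm{y}_k=\bm{y}(k\delta)$ for all $k\ge0$.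
   Context: $\psi$ and $\sigma$ are the entire functions determined by $\psi(x^2)=2(1-\cos x)/x^2$ and $\sigma(x^2)=\sin(x)/x$ (with $\psi(0)=\sigma(0)=1$); matrix functions are defined via their power series. *)

From HB Require Import structures.
From mathcomp Require Import all_boot all_order all_algebra.
From mathcomp Require Import all_classical all_reals all_analysis.
Set Implicit Arguments. Unset Strict Implicit. Unset Printing Implicit Defensive.
Import Order.TTheory GRing.Theory Num.Theory.
Import numFieldNormedType.Exports.
Local Open Scope ring_scope.

Section Defs.
Variable R : realType.

(* psi(z) = sum_k 2 (-1)^k z^k / (2k+2)!   (so psi(x^2) = 2(1 - cos x)/x^2) *)
Definition psi_coef (k : nat) : R := (-1) ^+ k * 2 / ((2 * k + 2)`!)%:R.
(* sigma(z) = sum_k (-1)^k z^k / (2k+1)!   (so sigma(x^2) = sin x / x) *)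
Definition sigma_coef (k : nat) : R := (-1) ^+ k / ((2 * k + 1)`!)%:R.

Definition psiM n (X : 'M[R]_n) : 'M[R]_n :=
  limn (series (fun k => psi_coef k *: X ^+ k)).
Definition sigmaM n (X : 'M[R]_n) : 'M[R]_n :=
  limn (series (fun k => sigma_coef k *: X ^+ k)).

Definition is_solution n (A : 'M[R]_n) (g : 'cV[R]_n) (y : R -> 'cV[R]_n) :=
  (forall t, derivable y t 1) /\
  (forall t, derivable (y^`())%classic t 1) /\
  (forall t, (y^`()^`())%classic t = - (A *m y t) + g).

Definition scheme_step n (A : 'M[R]_n) (g : 'cV[R]_n) (d : R)
  (p : 'cV[R]_n * 'cV[R]_n) : 'cV[R]_n * 'cV[R]_n :=
  let P := psiM (d ^+ 2 *: A) in
  let vh := p.2 + (2^-1 * d) *: (P *m (- (A *m p.1) + g)) in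
  let y1 := p.1 + d *: vh in
  (y1, vh + (2^-1 * d) *: (P *m (- (A *m y1) + g))).

Fixpoint scheme n (A : 'M[R]_n) (g : 'cV[R]_n) (d : R) (u v : 'cV[R]_n)
  (k : nat) : 'cV[R]_n * 'cV[R]_n :=
  match k with
  | 0 => (u, sigmaM (d ^+ 2 *: A) *m v)
  | k'.+1 => scheme_step A g d (scheme A g d u v k')
  end.
End Defs.

(* Put B := -A and let C(s), S(s), H(s) be the entire matrix functions
   sum_k B^k s^(2k)/(2k)!, sum_k B^k s^(2k+1)/(2k+1)! and sum_k B^k s^(2k+2)/(2k+2)!,
   so that C' = BS, S' = C, H' = S and C = 1 + BH.  A solution y then satisfies
   the variation-of-constants formula y(t+s) = C(s) y(t) + S(s) y'(t) + H(s) g: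
   the difference z solves z'' = Bz with zero initial data, and for such z the
   quantities C z - S z' and C z' - B S z are conserved, hence vanish, which gives
   C^2 z = B S^2 z, i.e. z = (C^2 - B S^2) z = 0.  Adding the formula at s = +d and
   s = -d yields the central-difference identity, because d^2 psi(d^2 A) = 2 H(d).
   The scheme satisfies the same two-step recurrence, and its first step
   reproduces y(d) because d sigma(d^2 A) = S(d). *)

From HB Require Import structures.
From mathcomp Require Import all_boot all_order all_algebra.
From mathcomp Require Import all_classical all_reals all_analysis.
From mathcomp Require Import ring.
Import Order.TTheory GRing.Theory Num.Theory.
Import numFieldNormedType.Exports.
Local Open Scope ring_scope.
Set Implicit Arguments. Unset Strict Implicit. Unset Printing Implicit Defensive.
Local Open Scope classical_set_scope.

Section ExponentialGeneratingFunction.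
Variable R : realType.
Implicit Types (a : nat -> R) (x : R).

Definition expbounded a := exists b K : R, forall j, `|a j| <= b * K ^+ j.

Definition egf a x : R := limn (pseries (fun j => a j / j`!%:R) x).

Lemma expbounded_shift a : expbounded a -> expbounded (fun j => a j.+1).
Proof. by case=> b [K hb]; exists (b * K), K => j; rewrite -mulrA -exprS. Qed.

Lemma expboundedZ c a : expbounded a -> expbounded (fun j => c * a j).
Proof.
by case=> b [K hb]; exists (`|c| * b), K => j; rewrite normrM -mulrA ler_wpM2l.
Qed.

Lemma is_cvg_egf a x : expbounded a -> cvgn (pseries (fun j => a j / j`!%:R) x).
Proof.
case=> b [K hb]; apply: normed_cvg; rewrite /normed_series_of /=.
apply: (@series_le_cvg _ _ (fun j => `|b| * exp_coeff (`|K| * `|x|) j)) => //.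
- by move=> j; rewrite mulr_ge0 // exp_coeff_ge0 // mulr_ge0.
- move=> j /=; rewrite /exp_coeff /= !normrM normfV normrX.
  rewrite [`|j`!%:R|]ger0_norm // exprMn.
  rewrite [leRHS](_ : _ = `|b| * `|K| ^+ j / j`!%:R * `|x| ^+ j); last by ring.
  rewrite ler_wpM2r ?exprn_ge0 // ler_wpM2r ?invr_ge0 //.
  by rewrite (le_trans (hb j)) // (le_trans (ler_norm _)) // normrM normrX.
- exact/is_cvg_seriesZ/is_cvg_series_exp_coeff.
Qed.

Lemma pseries_diffs_egf a :
  pseries_diffs (fun j => a j / j`!%:R) = (fun j => a j.+1 / j`!%:R).
Proof.
apply/funext => j; rewrite /pseries_diffs factS natrM invfM mulrCA mulrA.
by rewrite -mulrA mulVKf // pnatr_eq0.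
Qed.

Lemma is_derive_egf a x : expbounded a ->
  is_derive x 1 (egf a) (egf (fun j => a j.+1) x).
Proof.
move=> ha; have ha1 := expbounded_shift ha; have ha2 := expbounded_shift ha1.
have := @pseries_snd_diffs R (fun j => a j / j`!%:R) (`|x| + 1) x.
rewrite !pseries_diffs_egf; apply; try exact: is_cvg_egf.
by rewrite [ltRHS]ger0_norm ?ltrDl // addr_ge0.
Qed.

Lemma egf0 a : egf a 0 = a 0%N.
Proof.
apply: cvg_lim => //; rewrite -cvg_shiftS; apply: cvg_near_cst; apply: nearW => N.
rewrite /pseries /series /= big_nat_recl // big1 => [|j _]; last first.
  by rewrite expr0n /= mulr0.
by rewrite expr0 fact0 divr1 mulr1 addr0.
Qed.

Lemma egfZ c a x : expbounded a -> egf (fun j => c * a j) x = c * egf a x.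
Proof.
move=> ha; rewrite /egf.
have -> : pseries (fun j => c * a j / j`!%:R) x =
          (fun N => c * pseries (fun j => a j / j`!%:R) x N).
  apply/funext => N; rewrite /pseries /series /= mulr_sumr.
  by apply: eq_bigr => k _; rewrite !mulrA.
by apply: cvg_lim => //; apply: cvgMl_tmp; exact: is_cvg_egf.
Qed.

Lemma egf_sum (I : finType) (a : I -> nat -> R) x :
  (forall i, expbounded (a i)) ->
  egf (fun j => \sum_i a i j) x = \sum_i egf (a i) x.
Proof.
move=> ha; rewrite /egf.
have -> : pseries (fun j => (\sum_i a i j) / j`!%:R) x =
          \sum_i pseries (fun j => a i j / j`!%:R) x.
  apply/funext => N; rewrite fct_sumE /pseries /series /= exchange_big /=.
  by apply: eq_bigr => k _; rewrite !mulr_suml.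
apply: cvg_lim => //; elim/big_ind2: _ => [|u l v m hu hv|i _].
- exact: cvg_cst.
- exact: cvgD hu hv.
- exact: is_cvg_egf.
Qed.

Lemma egfN_even a x : (forall j, odd j -> a j = 0) -> egf a (- x) = egf a x.
Proof.
move=> ha; rewrite /egf; congr (limn _); apply/funext => N.
rewrite /pseries /series /=; apply: eq_bigr => j _.
have [oj|ej] := boolP (odd j); first by rewrite ha // !mul0r.
by rewrite exprNn -signr_odd (negbTE ej) mul1r.
Qed.

Lemma egfN_odd a x : expbounded a -> (forall j, ~~ odd j -> a j = 0) ->
  egf a (- x) = - egf a x.
Proof.
move=> hb ha; rewrite /egf -limN; last exact: is_cvg_egf.
congr (limn _); rewrite opprfctE; apply/funext => N.
rewrite /pseries /series /= -sumrN.
apply: eq_bigr => j _; have [oj|ej] := boolP (odd j); last first.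
  by rewrite ha // !mul0r oppr0.
by rewrite exprNn -signr_odd oj mulN1r mulrN.
Qed.

End ExponentialGeneratingFunction.

Section MatrixCalculus.
Variables (R : realType) (V : normedModType R).

Lemma is_derive_translate (W : normedModType R) (f : V -> W) (t a v : V) (df : W) :
  is_derive (t + a) v f df -> is_derive a v (fun u => f (t + u)) df.
Proof.
have E : (fun h : R => h^-1 *: (((fun u => f (t + u)) \o shift a) (h *: v)
             - f (t + a))) =
         (fun h : R => h^-1 *: ((f \o shift (t + a)) (h *: v) - f (t + a))).
  by apply/funext => h /=; rewrite addrCA.
by case=> dfx dfv; split; rewrite /derivable /derive E.
Qed.

Lemma is_derive_mx p q (F : V -> 'M[R]_(p, q)) x v (dF : 'M[R]_(p, q)) :
  (forall i l, is_derive x v (fun s => F s i l) (dF i l)) -> is_derive x v F dF.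
Proof.
move=> dFe; have dFx : derivable F x v.
  by apply/derivable_mxP => i l; exact: ex_derive.
split=> //; rewrite derive_mx //; apply/matrixP => i l; rewrite mxE.
exact: derive_val.
Qed.

Lemma is_derive_mx_entry p q (F : V -> 'M[R]_(p, q)) x v (dF : 'M[R]_(p, q)) i l :
  is_derive x v F dF -> is_derive x v (fun s => F s i l) (dF i l).
Proof.
case=> dFx <-; split; first exact: (derivable_mxP F x v).1.
by rewrite derive_mx // mxE.
Qed.

Lemma is_derive_mulmx p q r (F : V -> 'M[R]_(p, q)) (G : V -> 'M[R]_(q, r))
    x v dF dG :
  is_derive x v F dF -> is_derive x v G dG ->
  is_derive x v (fun s => F s *m G s) (dF *m G x + F x *m dG).
Proof.
move=> dFx dGx; apply: is_derive_mx => i l.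
have -> : (fun s => (F s *m G s) i l) =
          \sum_k ((fun s => F s i k) * (fun s => G s k l)).
  by apply/funext => s; rewrite mxE fct_sumE.
apply: is_derive_eq; first by apply: is_derive_sum => k; apply: is_deriveM;
  exact: is_derive_mx_entry.
rewrite !mxE -big_split /=; apply: eq_bigr => k _.
by rewrite addrC; congr (_ + _); exact: mulrC.
Qed.

Lemma is_derive_mulmxl p q r (P : 'M[R]_(p, q)) (G : V -> 'M[R]_(q, r)) x v dG :
  is_derive x v G dG -> is_derive x v (fun s => P *m G s) (P *m dG).
Proof.
move=> dGx; apply: is_derive_eq; first exact: (is_derive_mulmx (is_derive_cst P x v)).
by rewrite mul0mx add0r.
Qed.

Lemma is_derive_mulmxr p q r (F : V -> 'M[R]_(p, q)) (P : 'M[R]_(q, r)) x v dF :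
  is_derive x v F dF -> is_derive x v (fun s => F s *m P) (dF *m P).
Proof.
move=> dFx; apply: is_derive_eq.
  exact: is_derive_mulmx dFx (is_derive_cst P x v).
by rewrite mulmx0 addr0.
Qed.

End MatrixCalculus.

Lemma is_derive0_mx_cst (R : realType) p q (F : R -> 'M[R]_(p, q)) :
  (forall x : R, is_derive x (1 : R) F 0) -> forall x y, F x = F y.
Proof.
move=> dF0 x y; apply/matrixP => i l.
apply: (@is_derive_0_is_cst _ (fun s => F s i l)) => s.
by have := is_derive_mx_entry i l (dF0 s); rewrite mxE.
Qed.

Section MatrixEgf.
Variables (R : realType) (p q : nat).
Implicit Types (m : nat -> 'M[R]_(p, q)) (x : R).

Definition mx_egf m x : 'M[R]_(p, q) := \matrix_(i, l) egf (fun j => m j i l) x.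

Definition mx_expbounded m := forall i l, expbounded (fun j => m j i l).

Lemma mx_expbounded_shift m : mx_expbounded m -> mx_expbounded (fun j => m j.+1).
Proof. by move=> hm i l; exact: (expbounded_shift (hm i l)). Qed.

Lemma is_derive_mx_egf m x : mx_expbounded m ->
  is_derive x 1 (mx_egf m) (mx_egf (fun j => m j.+1) x).
Proof.
move=> hm; apply: is_derive_mx => i l; rewrite mxE.
have -> : (fun s => mx_egf m s i l) = egf (fun j => m j i l).
  by apply/funext => s; rewrite mxE.
exact: is_derive_egf.
Qed.

Lemma mx_egf0 m : mx_egf m 0 = m 0%N.
Proof. by apply/matrixP => i l; rewrite mxE egf0. Qed.

Lemma mx_egfN_even m x : (forall j, odd j -> m j = 0) -> mx_egf m (- x) = mx_egf m x.
Proof.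
move=> hm; apply/matrixP => i l; rewrite !mxE; apply: egfN_even => j oj.
by rewrite hm // mxE.
Qed.

Lemma mx_egfN_odd m x : mx_expbounded m -> (forall j, ~~ odd j -> m j = 0) ->
  mx_egf m (- x) = - mx_egf m x.
Proof.
move=> hb hm; apply/matrixP => i l; rewrite !mxE; apply: egfN_odd => // j ej.
by rewrite hm // mxE.
Qed.

End MatrixEgf.

Lemma mx_egf_mull (R : realType) p q r (P : 'M[R]_(r, p)) (m : nat -> 'M[R]_(p, q)) x :
  mx_expbounded m ->
  mx_egf (fun j => P *m m j) x = P *m mx_egf m x.
Proof.
move=> hm; apply/matrixP => i l; rewrite !mxE.
under eq_fun do rewrite mxE.
rewrite egf_sum => [|k]; last exact: expboundedZ.
by apply: eq_bigr => k _; rewrite mxE egfZ.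
Qed.

Lemma mx_egf_mulr (R : realType) p q r (P : 'M[R]_(q, r)) (m : nat -> 'M[R]_(p, q)) x :
  mx_expbounded m ->
  mx_egf (fun j => m j *m P) x = mx_egf m x *m P.
Proof.
move=> hm; apply/matrixP => i l; rewrite !mxE.
under eq_fun do rewrite mxE; under eq_fun do under eq_bigr do rewrite mulrC.
rewrite egf_sum => [|k]; last exact: expboundedZ.
by apply: eq_bigr => k _; rewrite mxE egfZ // mulrC.
Qed.

Lemma mx_egf_comm (R : realType) n (X : 'M[R]_n) (m : nat -> 'M[R]_n) x :
  mx_expbounded m -> (forall j, X *m m j = m j *m X) ->
  X *m mx_egf m x = mx_egf m x *m X.
Proof.
move=> hm hX; rewrite -mx_egf_mull // -mx_egf_mulr //.
by congr mx_egf; apply/funext => j.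
Qed.

Lemma leq_half j : (j./2 <= j)%N.
Proof. by rewrite -{2}(odd_double_half j) -addnn addnA leq_addl. Qed.

Section Propagators.
Variables (R : realType) (n : nat) (B : 'M[R]_n).

Lemma pow_entry_bound :
  exists K : R, 1 <= K /\ forall k i l, `|(B ^+ k) i l| <= K ^+ k.
Proof.
set a := \sum_i \sum_k `|B i k|.
have a0 : 0 <= a by rewrite sumr_ge0 // => i _; rewrite sumr_ge0.
have rowB i : \sum_k `|B i k| <= a.
  by rewrite /a [leRHS](bigD1 i) //= lerDl sumr_ge0 // => i' _; exact: sumr_ge0.
exists (1 + a); split; first by rewrite lerDl.
elim=> [|k IH] i l.
  by rewrite expr0 !mxE; case: (i == l); rewrite ?normr1 ?normr0.
rewrite exprS -mulmxE mxE (le_trans (ler_norm_sum _ _ _)) //.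
apply: (@le_trans _ _ (\sum_j `|B i j| * (1 + a) ^+ k)).
  by apply: ler_sum => j _; rewrite normrM ler_wpM2l.
rewrite -mulr_suml exprS ler_wpM2r ?exprn_ge0 ?addr_ge0 //.
by rewrite (le_trans (rowB i)) // lerDr.
Qed.

Definition zero_or_pow (m : nat -> 'M[R]_n) :=
  forall j, m j = 0 \/ exists2 k, (k <= j)%N & m j = B ^+ k.

Lemma mx_expbounded_zero_or_pow m : zero_or_pow m -> mx_expbounded m.
Proof.
move=> hm i l; have [K [K1 hK]] := pow_entry_bound; have K0 := le_trans ler01 K1.
exists 1, K => j; rewrite mul1r; have [->|[k kj ->]] := hm j.
  by rewrite mxE normr0 exprn_ge0.
by rewrite (le_trans (hK k i l)) // ler_weXn2l.
Qed.

Lemma zero_or_pow_comm X m : X *m B = B *m X -> zero_or_pow m ->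
  forall j, X *m m j = m j *m X.
Proof.
move=> XB hm j; have [->|[k _ ->]] := hm j; first by rewrite mulmx0 mul0mx.
by rewrite !mulmxE; apply: commrX; rewrite /GRing.comm -!mulmxE.
Qed.

(* C, S, H; for B = -A: cos(s sqrt A), sin(s sqrt A) / sqrt A, (1 - cos(s sqrt A)) / A. *)
Definition cosm_coef j : 'M[R]_n := if odd j then 0 else B ^+ j./2.
Definition sinm_coef j : 'M[R]_n := if odd j then B ^+ j./2 else 0.
Definition versm_coef j : 'M[R]_n := if odd j || (j == 0) then 0 else B ^+ j./2.-1.

Definition cosm := mx_egf cosm_coef.
Definition sinm := mx_egf sinm_coef.
Definition versm := mx_egf versm_coef.

Lemma zero_or_pow_cosm_coef : zero_or_pow cosm_coef.
Proof.
move=> j; rewrite /cosm_coef; case: odd; first by left.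
by right; exists j./2; rewrite ?leq_half.
Qed.

Lemma zero_or_pow_sinm_coef : zero_or_pow sinm_coef.
Proof.
move=> j; rewrite /sinm_coef; case: odd; last by left.
by right; exists j./2; rewrite ?leq_half.
Qed.

Lemma zero_or_pow_versm_coef : zero_or_pow versm_coef.
Proof.
move=> j; rewrite /versm_coef; case: ifP => _; [by left | right].
by exists j./2.-1 => //; rewrite (leq_trans (leq_pred _)) ?leq_half.
Qed.

Lemma cosm_coefS j : cosm_coef j.+1 = B *m sinm_coef j.
Proof.
rewrite /cosm_coef /sinm_coef /=; case: (boolP (odd j)) => oj /=.
  by rewrite mulmxE -exprS uphalf_half oj.
by rewrite mulmx0.
Qed.

Lemma sinm_coefS j : sinm_coef j.+1 = cosm_coef j.
Proof.
rewrite /cosm_coef /sinm_coef /=; case: (boolP (odd j)) => oj //=.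
by rewrite uphalf_half (negbTE oj).
Qed.

Lemma versm_coefS j : versm_coef j.+1 = sinm_coef j.
Proof.
rewrite /versm_coef /sinm_coef /= orbF; case: (boolP (odd j)) => oj //=.
by rewrite uphalf_half oj.
Qed.

Lemma mx_expbounded_cosm_coef : mx_expbounded cosm_coef.
Proof. exact/mx_expbounded_zero_or_pow/zero_or_pow_cosm_coef. Qed.
Lemma mx_expbounded_sinm_coef : mx_expbounded sinm_coef.
Proof. exact/mx_expbounded_zero_or_pow/zero_or_pow_sinm_coef. Qed.
Lemma mx_expbounded_versm_coef : mx_expbounded versm_coef.
Proof. exact/mx_expbounded_zero_or_pow/zero_or_pow_versm_coef. Qed.

Lemma is_derive_cosm (s : R) : is_derive s 1 cosm (B *m sinm s).
Proof.
apply: is_derive_eq; first exact: is_derive_mx_egf mx_expbounded_cosm_coef.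
rewrite -mx_egf_mull; last exact: mx_expbounded_sinm_coef.
by congr mx_egf; apply/funext => j; rewrite cosm_coefS.
Qed.

Lemma is_derive_sinm (s : R) : is_derive s 1 sinm (cosm s).
Proof.
apply: is_derive_eq; first exact: is_derive_mx_egf mx_expbounded_sinm_coef.
by congr mx_egf; apply/funext => j; rewrite sinm_coefS.
Qed.

Lemma is_derive_versm (s : R) : is_derive s 1 versm (sinm s).
Proof.
apply: is_derive_eq; first exact: is_derive_mx_egf mx_expbounded_versm_coef.
by congr mx_egf; apply/funext => j; rewrite versm_coefS.
Qed.

Lemma cosm0 : cosm 0 = 1.
Proof. by rewrite /cosm mx_egf0. Qed.
Lemma sinm0 : sinm 0 = 0.
Proof. by rewrite /sinm mx_egf0. Qed.
Lemma versm0 : versm 0 = 0.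
Proof. by rewrite /versm mx_egf0. Qed.

Lemma cosmN s : cosm (- s) = cosm s.
Proof. by apply: mx_egfN_even => j oj; rewrite /cosm_coef oj. Qed.
Lemma sinmN s : sinm (- s) = - sinm s.
Proof.
apply: mx_egfN_odd mx_expbounded_sinm_coef _ => j ej.
by rewrite /sinm_coef (negbTE ej).
Qed.
Lemma versmN s : versm (- s) = versm s.
Proof. by apply: mx_egfN_even => j oj; rewrite /versm_coef oj. Qed.

Section CommutingWithB.
Variable X : 'M[R]_n.
Hypothesis XB : X *m B = B *m X.

Lemma cosm_comm s : X *m cosm s = cosm s *m X.
Proof.
apply: mx_egf_comm mx_expbounded_cosm_coef _.
exact: zero_or_pow_comm XB zero_or_pow_cosm_coef.
Qed.

Lemma sinm_comm s : X *m sinm s = sinm s *m X.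
Proof.
apply: mx_egf_comm mx_expbounded_sinm_coef _.
exact: zero_or_pow_comm XB zero_or_pow_sinm_coef.
Qed.

Lemma versm_comm s : X *m versm s = versm s *m X.
Proof.
apply: mx_egf_comm mx_expbounded_versm_coef _.
exact: zero_or_pow_comm XB zero_or_pow_versm_coef.
Qed.

End CommutingWithB.

Lemma cosmB s : cosm s *m B = B *m cosm s.
Proof. by rewrite cosm_comm. Qed.
Lemma sinmB s : sinm s *m B = B *m sinm s.
Proof. by rewrite sinm_comm. Qed.
Lemma versmB s : versm s *m B = B *m versm s.
Proof. by rewrite versm_comm. Qed.
Lemma cosm_sinm s t : cosm s *m sinm t = sinm t *m cosm s.
Proof. by rewrite sinm_comm // cosmB. Qed.

Lemma cosm_versm s : cosm s = 1 + B *m versm s.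
Proof.
suff /(_ s 0) : forall s t, cosm s - B *m versm s = cosm t - B *m versm t.
  by rewrite cosm0 versm0 mulmx0 subr0 => /eqP; rewrite subr_eq => /eqP.
apply: is_derive0_mx_cst => x; apply: is_derive_eq.
  exact: is_deriveB (is_derive_cosm x) (is_derive_mulmxl B (is_derive_versm x)).
by rewrite subrr.
Qed.

Lemma cosm_sinm_pythagoras s : cosm s *m cosm s - B *m sinm s *m sinm s = 1.
Proof.
suff /(_ s 0) -> : forall s t, cosm s *m cosm s - B *m sinm s *m sinm s =
    cosm t *m cosm t - B *m sinm t *m sinm t.
  by rewrite cosm0 sinm0 !mulmx0 subr0 mulmx1.
apply: is_derive0_mx_cst => x; apply: is_derive_eq.
  apply: is_deriveB (is_derive_mulmx (is_derive_cosm x) (is_derive_cosm x)) _.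
  exact: is_derive_mulmx (is_derive_mulmxl B (is_derive_sinm x)) (is_derive_sinm x).
by rewrite [cosm x *m (B *m _)]mulmxA cosmB [X in X - _]addrC subrr.
Qed.

Lemma second_order_uniq r (z w : R -> 'M[R]_(n, r)) :
  (forall s : R, is_derive s 1 z (w s)) ->
  (forall s : R, is_derive s 1 w (B *m z s)) ->
  z 0 = 0 -> w 0 = 0 -> forall s, z s = 0.
Proof.
move=> dz dw z0 w0 s.
have vanish (F : R -> 'M[R]_(n, r)) :
    F 0 = 0 -> (forall x : R, is_derive x 1 F 0) -> F s = 0.
  by move=> F0 dF; rewrite (is_derive0_mx_cst dF s 0).
have /eqP : cosm s *m z s - sinm s *m w s = 0.
  apply: (vanish (fun x => cosm x *m z x - sinm x *m w x)).
    by rewrite z0 w0 !mulmx0 subr0.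
  move=> x; apply: is_derive_eq.
    exact: is_deriveB (is_derive_mulmx (is_derive_cosm x) (dz x))
                      (is_derive_mulmx (is_derive_sinm x) (dw x)).
  by rewrite [sinm x *m (B *m _)]mulmxA sinmB [X in X - _]addrC subrr.
rewrite subr_eq0 => /eqP Cz.
have /eqP : cosm s *m w s - B *m sinm s *m z s = 0.
  apply: (vanish (fun x => cosm x *m w x - B *m sinm x *m z x)).
    by rewrite z0 w0 !mulmx0 subr0.
  move=> x; apply: is_derive_eq.
    exact: is_deriveB (is_derive_mulmx (is_derive_cosm x) (dw x))
             (is_derive_mulmx (is_derive_mulmxl B (is_derive_sinm x)) (dz x)).
  by rewrite [cosm x *m (B *m _)]mulmxA cosmB [X in X - _]addrC subrr.
rewrite subr_eq0 => /eqP Cw.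
have CCz : cosm s *m (cosm s *m z s) = B *m (sinm s *m (sinm s *m z s)).
  by rewrite Cz mulmxA cosm_sinm -mulmxA Cw !mulmxA sinmB.
by rewrite -[z s]mul1mx -[1%:M](cosm_sinm_pythagoras s) mulmxBl -!mulmxA CCz subrr.
Qed.

End Propagators.

Lemma cvg_mx_entries (R : realFieldType) p q (u : nat -> 'M[R]_(p, q))
    (L : 'M[R]_(p, q)) :
  (forall i l, (fun N => u N i l) @ \oo --> L i l) -> u @ \oo --> L.
Proof.
move=> uL; apply/cvgrPdist_le => e e0; near=> N.
rewrite /Num.Def.normr /= mx_normrE (bigmax_le _ (ltW e0)) //= => il _.
rewrite !mxE /=; move: il; near: N; apply: filter_forall => -[i l] /=.
exact: ((cvgrPdist_le _ _).1 (uL i l) e e0).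
Unshelve. all: by end_near. Qed.

Lemma limn_from_scaled (R : numFieldType) (V : normedModType R) (u : nat -> V)
    (c : R) (L : V) :
  c != 0 -> (fun N => c *: u N) @ \oo --> L -> limn u = c^-1 *: L.
Proof.
move=> c0 cuL; apply: cvg_lim => //.
rewrite (_ : u = fun N => c^-1 *: (c *: u N)); first exact: cvgZ (cvg_cst _) cuL.
by apply/funext => N; rewrite scalerA mulVf // scale1r.
Qed.

Lemma mxexprZ (R : comRingType) n (c : R) (M : 'M[R]_n) k :
  (c *: M) ^+ k = c ^+ k *: M ^+ k.
Proof.
elim: k => [|k IH]; first by rewrite !expr0 scale1r.
by rewrite !exprS IH -!mulmxE -scalemxAr -scalemxAl scalerA [c ^+ k * c]mulrC.
Qed.

Lemma cvg_double : (fun N => N.*2) @ \oo --> \oo.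
Proof. by under eq_fun do rewrite -mul2n; exact: cvg_mulnl. Qed.

Section MatrixFunctionsAsPropagators.
Variables (R : realType) (n : nat) (A : 'M[R]_n).

Lemma sinm_partial_sum d N i l :
  (d *: series (fun k => sigma_coef R k *: (d ^+ 2 *: A) ^+ k) N) i l =
  pseries (fun j => sinm_coef (- A) j i l / j`!%:R) d N.*2.
Proof.
elim: N => [|N IH]; first by rewrite /pseries /series /= !big_geq // scaler0 mxE.
rewrite /pseries /series /= in IH *.
rewrite big_nat_recr //= scalerDr mxE IH doubleS !big_nat_recr //= -addrA.
congr (_ + _).
rewrite /sinm_coef /= odd_double /= uphalf_double -scaleN1r !mxexprZ !mxE.
rewrite /sigma_coef -!mul2n addn1 [d ^+ (2 * N).+1]exprS exprM; ring.
Qed.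

Lemma versm_partial_sum d N i l :
  (d ^+ 2 *: series (fun k => psi_coef R k *: (d ^+ 2 *: A) ^+ k) N) i l =
  2 * pseries (fun j => versm_coef (- A) j i l / j`!%:R) d N.*2.+1.
Proof.
elim: N => [|N IH].
  by rewrite /pseries /series /= big_geq // big_nat1 /= scaler0 !mxE !mul0r mulr0.
rewrite /pseries /series /= in IH *.
rewrite big_nat_recr //= scalerDr mxE IH doubleS.
rewrite [X in _ = 2 * X]big_nat_recr //= [X in _ = 2 * (X + _)]big_nat_recr //=.
rewrite -addrA mulrDr; congr (_ + _).
rewrite /versm_coef /= odd_double /= doubleK -scaleN1r !mxexprZ !mxE /psi_coef.
rewrite -!mul2n -[(2 * N).+2]addn2 exprD exprM; ring.
Qed.

Lemma sigmaM_sinm d : d *: sigmaM (d ^+ 2 *: A) = sinm (- A) d.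
Proof.
have [->|d0] := eqVneq d 0; first by rewrite scale0r sinm0.
rewrite /sigmaM; suff /(limn_from_scaled d0) -> :
    (fun N => d *: series (fun k => sigma_coef R k *: (d ^+ 2 *: A) ^+ k) N)
      @ \oo --> sinm (- A) d.
  by rewrite scalerA mulfV // scale1r.
apply: cvg_mx_entries => i l; rewrite mxE.
under eq_fun do rewrite sinm_partial_sum.
apply: cvg_comp cvg_double _; exact: is_cvg_egf (mx_expbounded_sinm_coef _ i l).
Qed.

Lemma psiM_versm d : d ^+ 2 *: psiM (d ^+ 2 *: A) = 2 *: versm (- A) d.
Proof.
have [->|d0] := eqVneq d 0; first by rewrite expr0n scale0r versm0 scaler0.
have d20 : d ^+ 2 != 0 by rewrite expf_neq0.
rewrite /psiM; suff /(limn_from_scaled d20) -> :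
    (fun N => d ^+ 2 *: series (fun k => psi_coef R k *: (d ^+ 2 *: A) ^+ k) N)
      @ \oo --> 2 *: versm (- A) d.
  by rewrite scalerA mulfV // scale1r.
apply: cvg_mx_entries => i l; rewrite !mxE.
under eq_fun do rewrite versm_partial_sum.
have double1 : (fun N => N.*2.+1) @ \oo --> \oo.
  exact: cvg_comp cvg_double (cvg_addnl 1).
apply: cvgMl_tmp; apply: cvg_comp double1 _.
exact: is_cvg_egf (mx_expbounded_versm_coef _ i l).
Qed.

End MatrixFunctionsAsPropagators.

Lemma scheme_step_twice (R : realType) n (A : 'M[R]_n) g d (p : 'cV[R]_n * 'cV[R]_n) :
  (scheme_step A g d (scheme_step A g d p)).1 =
  2 *: (scheme_step A g d p).1 - p.1 +
  d ^+ 2 *: (psiM (d ^+ 2 *: A) *m (- (A *m (scheme_step A g d p).1) + g)).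
Proof.
case: p => y0 v0; rewrite /scheme_step /=.
set c0 := psiM _ *m (- (A *m y0) + g); set y1 := y0 + _.
set c1 := psiM _ *m (- (A *m y1) + g).
clearbody c1; rewrite {}/y1; clearbody c0.
by apply/matrixP => i j; rewrite !mxE; field.
Qed.

Section Solution.
Variables (R : realType) (n : nat) (A : 'M[R]_n) (g : 'cV[R]_n) (y : R -> 'cV[R]_n).
Hypothesis y_sol : is_solution A g y.

Lemma is_derive_solution (t : R) : is_derive t 1 y (y^`()%classic t).
Proof. by case: y_sol => dy _; rewrite derive1E; exact: derivableP. Qed.

Lemma is_derive_solution' (t : R) : is_derive t 1 y^`()%classic (- A *m y t + g).
Proof.
case: y_sol => _ [dy' y'']; rewrite mulNmx -y'' derive1E; exact: derivableP.
Qed.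

Lemma solution_propagator t s :
  y (t + s) = cosm (- A) s *m y t + sinm (- A) s *m y^`()%classic t
              + versm (- A) s *m g.
Proof.
apply/eqP; rewrite -subr_eq0; apply/eqP; move: s.
apply: (@second_order_uniq _ _ (- A) _ _
  (fun u => y^`()%classic (t + u) - (- A *m sinm (- A) u *m y t
            + cosm (- A) u *m y^`()%classic t + sinm (- A) u *m g))) => [u|u||].
- apply: is_deriveB; first exact/is_derive_translate/is_derive_solution.
  apply: is_deriveD; last exact/is_derive_mulmxr/is_derive_versm.
  apply: is_deriveD; apply/is_derive_mulmxr; first exact: is_derive_cosm.
  exact: is_derive_sinm.
- apply: is_derive_eq.
    apply: is_deriveB; first exact/is_derive_translate/is_derive_solution'.
    apply: is_deriveD; last exact/is_derive_mulmxr/is_derive_sinm.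
    apply: is_deriveD; apply/is_derive_mulmxr; last exact: is_derive_cosm.
    exact/is_derive_mulmxl/is_derive_sinm.
  rewrite [in cosm _ u *m g]cosm_versm mulmxDl mul1mx !mulmxBr !mulmxDr !mulmxA.
  move: (- A *m y (t + u)) (- A *m cosm (- A) u *m y t) => a b.
  move: (- A *m sinm (- A) u *m y^`()%classic t) (- A *m versm (- A) u *m g) => c e.
  by apply/matrixP => i j; rewrite !mxE; ring.
- by rewrite addr0 cosm0 sinm0 versm0 mul1mx !mul0mx !addr0 subrr.
- by rewrite addr0 cosm0 sinm0 mulmx0 mul1mx !mul0mx add0r addr0 subrr.
Qed.

Lemma central_difference t d :
  y (t + d) - 2 *: y t + y (t - d) =
  d ^+ 2 *: (psiM (d ^+ 2 *: A) *m (- (A *m y t) + g)).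
Proof.
rewrite !solution_propagator cosmN sinmN versmN scalemxAl psiM_versm.
rewrite cosm_versm mulmxDl mul1mx -scalemxAl -mulNmx mulmxDr mulmxA versmB.
rewrite [- sinm _ _ *m _]mulNmx.
move: (- A *m versm (- A) d *m y t) (sinm (- A) d *m y^`()%classic t) => a b.
move: (versm (- A) d *m g) (y t) => c e.
by apply/matrixP => i j; rewrite !mxE; ring.
Qed.

Lemma scheme_first_step d u v : y 0 = u -> y^`()%classic 0 = v ->
  (scheme A g d u v 1).1 = y d.
Proof.
move=> y0 y'0; rewrite -[d]add0r solution_propagator y0 y'0 add0r /= /scheme_step /=.
rewrite scalerDr scalemxAl sigmaM_sinm scalerA scalemxAl.
rewrite (_ : d * (2^-1 * d) = 2^-1 * d ^+ 2); last by rewrite expr2; ring.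
rewrite -scalerA psiM_versm scalerA mulVf ?pnatr_eq0 // scale1r.
rewrite -mulNmx mulmxDr mulmxA versmB cosm_versm mulmxDl mul1mx.
move: (- A *m versm (- A) d *m u) (sinm (- A) d *m v) (versm (- A) d *m g) => a b c.
by apply/matrixP => i j; rewrite !mxE; ring.
Qed.

Lemma scheme_solution d u v : y 0 = u -> y^`()%classic 0 = v ->
  forall k, (scheme A g d u v k).1 = y (k%:R * d).
Proof.
move=> y0 y'0.
suff hk k : (scheme A g d u v k).1 = y (k%:R * d) /\
            (scheme A g d u v k.+1).1 = y (k.+1%:R * d) by move=> k; case: (hk k).
elim: k => [|k [IHk IHk1]].
  by rewrite mul0r mul1r y0 scheme_first_step.
split=> //; rewrite [LHS]scheme_step_twice IHk1 IHk.
have succ_d m : m.+1%:R * d = m%:R * d + d by rewrite -addn1 natrD mulrDl mul1r.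
have := central_difference (k.+1%:R * d) d.
rewrite -succ_d [in _ - d]succ_d addrK => <-.
move: (y (k.+2%:R * d)) (y (k.+1%:R * d)) (y (k%:R * d)) => a b c.
by apply/matrixP => i j; rewrite !mxE; ring.
Qed.

End Solution.

Unset Implicit Arguments.

Theorem mainTheorem7 (R : realType) (n : nat) (A : 'M[R]_n) (g : 'cV[R]_n)
  (y : R -> 'cV[R]_n) :
  is_solution A g y ->
  (forall (t d : R), 0 < d ->
     y (t + d) - 2 *: y t + y (t - d) =
     d ^+ 2 *: (psiM (d ^+ 2 *: A) *m (- (A *m y t) + g))) /\
  (forall (d : R) (u v : 'cV[R]_n), 0 < d ->
     y 0 = u -> (y^`())%classic 0 = v ->
     forall k : nat, (scheme A g d u v k).1 = y (k%:R * d)).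
Proof.
move=> y_sol; split=> [t d _ | d u v _ y0 y'0].
- exact: central_difference.
- exact: scheme_solution.
Qed.
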